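(* Let $D$ be a finite distributive lattice and $Q\subseteq D$, and suppose the inclusion $Q\subseteq D$ is chain-representable, say $Q=\mathrm{Rep}(C,\sigma,D)$ for a $J(D)$-colored chain $(C,\sigma,D)$. Then there exist a finite algebra $A$ with $|A|=|C|$ and a lattice isomorphism $\phi\colon\mathrm{Con}(A)\to D$ such that $\phi(\mathrm{Princ}(A))=Q$. (Here $1_D\in Q$ is not assumed.)
   Context: $J(D)$ is the set of nonzero join-irreducible elements of $D$. A $J(D)$-colored chain is a triple $(C,\sigma,D)$ where $C$ is a finite chain and $\sigma\colon\mathrm{Prime}(C)\to J(D)$ is a surjective map from the set $\mathrm{Prime}(C)$ of prime intervals (covering pairs) of $C$ onto $J(D)$. For an interval $I$ of $C$, $\mathrm{rep}(I)=\bigvee_{\mathfrak p\in\mathrm{Prime}(I)}\sigma(\mathfrak p)$ (join in $D$, empty join $=0_D$), and $\mathrm{Rep}(C,\sigma,D)=\{\mathrm{rep}(I): I\text{ an interval of }C\}$. The inclusion $Q\subseteq D$ is chain-representable if $Q=\mathrm{Rep}(C,\sigma,D)$ for some such triple. For an algebra $A$, $\mathrm{Con}(A)$ is its congruence lattice and $\mathrm{Princ}(A)$ its set of principal congruences. *)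

From HB Require Import structures.
From mathcomp Require Import all_boot all_order.
Set Implicit Arguments. Unset Strict Implicit. Unset Printing Implicit Defensive.
Import Order.TTheory.
Local Open Scope order_scope.

Definition join_irr {d : Order.disp_t} {D : finTBDistrLatticeType d} (x : D) : Prop :=
  x != \bot /\ (forall y z : D, x = y `|` z -> x = y \/ x = z).

Definition prime_int {dc : Order.disp_t} {C : finOrderType dc} (p : C * C) : bool :=
  (p.1 < p.2) && [forall c : C, ~~ ((p.1 < c) && (c < p.2))].

(* (C, sigma, D) is a J(D)-colored chain: sigma maps Prime(C) onto J(D).
   sigma is a total function on pairs; only its values on prime intervals matter. *)
Definition colored_chain {d dc : Order.disp_t} {D : finTBDistrLatticeType d}
  {C : finOrderType dc} (sigma : C * C -> D) : Prop :=
  (forall p, prime_int p -> join_irr (sigma p)) /\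
  (forall j : D, join_irr j -> exists p, prime_int p /\ sigma p = j).

Definition rep {d dc : Order.disp_t} {D : finTBDistrLatticeType d}
  {C : finOrderType dc} (sigma : C * C -> D) (a b : C) : D :=
  \join_(p : C * C | prime_int p && (a <= p.1) && (p.2 <= b)) sigma p.

Definition Rep {d dc : Order.disp_t} {D : finTBDistrLatticeType d}
  {C : finOrderType dc} (sigma : C * C -> D) : {set D} :=
  [set x : D | [exists a : C, exists b : C, (a <= b) && (x == rep sigma a b)]].

Record algebra (T : Type) := Algebra {
  op_index : Type;
  arity : op_index -> nat;
  op : forall i : op_index, (arity i).-tuple T -> T
}.

Definition is_congruence (T : finType) (A : algebra T) (th : {set T * T}) : Prop :=
  [/\ (forall x : T, (x, x) \in th),
      (forall x y : T, (x, y) \in th -> (y, x) \in th),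
      (forall x y z : T, (x, y) \in th -> (y, z) \in th -> (x, z) \in th)
    & (forall (i : op_index A) (u v : (arity i).-tuple T),
         (forall k : 'I_(arity i), (tnth u k, tnth v k) \in th) ->
         (op u, op v) \in th)].

Definition is_principal (T : finType) (A : algebra T) (th : {set T * T}) : Prop :=
  is_congruence A th /\
  exists a b : T, (a, b) \in th /\
    (forall ps, is_congruence A ps -> (a, b) \in ps -> th \subset ps).

(* phi : Con(A) -> D is a lattice isomorphism (Con(A) ordered by inclusion);
   for lattices, lattice isomorphisms are exactly order isomorphisms. *)
Definition con_lattice_iso (T : finType) (A : algebra T) {d : Order.disp_t}
  {D : finTBDistrLatticeType d} (phi : {set T * T} -> D) : Prop :=
  [/\ (forall th ps, is_congruence A th -> is_congruence A ps ->
         phi th = phi ps -> th = ps),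
      (forall x : D, exists th, is_congruence A th /\ phi th = x)
    & (forall th ps, is_congruence A th -> is_congruence A ps ->
         (th \subset ps <-> phi th <= phi ps))].

From HB Require Import structures.
From mathcomp Require Import all_boot all_order.
Import Order.TTheory.
Local Open Scope order_scope.

Set Implicit Arguments. Unset Strict Implicit. Unset Printing Implicit Defensive.

(* Take A = (C, all unary maps f with cdist (f a) (f b) <= cdist a b), where
   cdist a b is the join of the colors of the prime intervals between a and b;
   cdist is a D-valued pseudometric, so x |-> {(a,b) | cdist a b <= x} maps D
   into Con(A).  Conversely a congruence containing the pair (a,b) contains
   every prime interval whose color lies below cdist a b: as the color is
   join-irreducible, hence join-prime, it lies below the color of some prime
   interval q between a and b, and the map collapsing the chain onto the ends
   of p at q is an operation of A.  Chaining prime intervals then shows that a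
   congruence th is exactly {(a,b) | cdist a b <= join of cdist over th}, and
   the principal congruences are the sets {(c,e) | cdist c e <= cdist a b}. *)

Section FinPOrder.
Variables (d : Order.disp_t) (T : finPOrderType d).

Lemma lt_ind (P : T -> Prop) :
  (forall x, (forall y, y < x -> P y) -> P x) -> forall x, P x.
Proof.
move=> IH x; have [n] := ubnP #|[set y | y < x]|.
elim: n x => // n IHn x /ltnSE le_lt_n; apply: IH => y lt_yx; apply: IHn.
apply: leq_trans le_lt_n; apply: proper_card; apply/properP; split.
  by apply/subsetP => z; rewrite !inE => /lt_trans; apply.
by exists y; rewrite !inE ?lt_yx ?ltxx.
Qed.

End FinPOrder.

Section JoinIrreducible.
Variables (d : Order.disp_t) (D : finTBDistrLatticeType d).

Lemma join_irr_le_join (j : D) (I : Type) (s : seq I) (P : pred I) (F : I -> D) :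
  join_irr j -> j <= \join_(i <- s | P i) F i -> exists2 i, P i & j <= F i.
Proof.
move=> [j_neq0 j_irr]; elim: s => [|a s IH]; first by rewrite big_nil lex0 (negbTE j_neq0).
rewrite big_cons; case: ifP => // Pa le_j.
have : j = (j `&` F a) `|` (j `&` \join_(i <- s | P i) F i).
  by rewrite -meetUr; apply/esym/meet_idPl.
case/j_irr => def_j; first by exists a => //; apply/meet_idPl; rewrite -def_j.
by apply: IH; apply/meet_idPl; rewrite -def_j.
Qed.

Lemma join_irr_decomposition (I : finType) (P : pred I) (F : I -> D) :
  (forall j, join_irr j -> exists2 i, P i & F i = j) ->
  forall x, x = \join_(i | P i && (F i <= x)) F i.
Proof.
move=> F_onto; elim/lt_ind => x IH; apply/le_anti; rewrite joins_le ?andbT;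
  last by move=> i /andP[].
case: (eqVneq x \bot) => [->|x_neq0]; first exact: le0x.
have below_x y : y < x -> y <= \join_(i | P i && (F i <= x)) F i.
  move=> lt_yx; rewrite (IH y lt_yx); apply/joinsP => i /andP[Pi le_Fy].
  by apply: (@joins_sup _ _ _ i); rewrite Pi (le_trans le_Fy (ltW lt_yx)).
have [/existsP[y /existsP[z /and3P[/eqP def_x yx zx]]]|no_split] :=
  boolP [exists y, exists z, [&& x == y `|` z, y != x & z != x]].
  have lt_yx : y < x by rewrite lt_def eq_sym yx def_x leUl.
  have lt_zx : z < x by rewrite lt_def eq_sym zx def_x leUr.
  by rewrite {1}def_x leUx !below_x.
have [i Pi Fi] : exists2 i, P i & F i = x.
  apply: F_onto; split=> // y z def_x; move/existsPn/(_ y)/existsPn/(_ z): no_split.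
  by rewrite -def_x eqxx /= negb_and !negbK => /orP[]/eqP->; [left|right].
by apply: (@joins_min _ _ _ i); rewrite ?Pi ?Fi ?lexx.
Qed.

End JoinIrreducible.

Section ColoredChain.
Variables (d dc : Order.disp_t) (D : finTBDistrLatticeType d) (C : finOrderType dc).
Implicit Types (a b c : C) (p q : C * C) (th ps : {set C * C}).

Lemma prime_int_lt p : prime_int p -> p.1 < p.2.
Proof. by case/andP. Qed.

Lemma prime_int_ge p c : prime_int p -> p.1 < c -> p.2 <= c.
Proof.
case/andP=> _ /forallP/(_ c); rewrite negb_and => /orP[/negbTE-> //|].
by rewrite -leNgt.
Qed.

Lemma prime_int_sub p q :
  prime_int p -> prime_int q -> p.1 <= q.1 -> q.2 <= p.2 -> q = p.
Proof.
move=> pp pq le1 le2.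
have lt_q1 : q.1 < p.2 := lt_le_trans (prime_int_lt pq) le2.
have e1 : q.1 = p.1.
  apply/le_anti; rewrite le1 andbT leNgt; apply/negP => lt_p1.
  by move: (prime_int_ge pp lt_p1); rewrite leNgt lt_q1.
have e2 : q.2 = p.2.
  by apply/le_anti; rewrite le2 prime_int_ge // -e1 prime_int_lt.
by case: p q e1 e2 {pp pq le1 le2 lt_q1} => [? ?] [? ?] /= -> ->.
Qed.

Definition within p a b : bool :=
  ((a <= p.1) && (p.2 <= b)) || ((b <= p.1) && (p.2 <= a)).

Lemma within_sym p a b : within p a b = within p b a.
Proof. exact: orbC. Qed.

Lemma within_split p a b c :
  prime_int p -> within p a c -> within p a b || within p b c.
Proof.
move=> pp; rewrite /within => /orP[]/andP[h1 h2];
  case: (leP b p.1) => hb; by rewrite ?(prime_int_ge pp hb) ?h1 ?h2 ?hb ?orbT.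
Qed.

Lemma interval_of_prime_int (R : rel C) : reflexive R -> transitive R ->
  forall a b, a <= b ->
  (forall p, prime_int p -> a <= p.1 -> p.2 <= b -> R p.1 p.2) -> R a b.
Proof.
move=> R_refl R_trans a; elim/lt_ind => b IH le_ab R_primes.
case: (eqVneq a b) => [<-|neq_ab]; first exact: R_refl.
have lt_ab : a < b by rewrite lt_def eq_sym neq_ab.
case: (@arg_maxP _ _ _ a (fun c => (a <= c) && (c < b)) id) => [|c /andP[le_ac lt_cb] c_max].
  by rewrite lexx.
have prime_cb : prime_int (c, b).
  rewrite /prime_int /= lt_cb; apply/forallP => z; apply/negP => /andP[lt_cz lt_zb].
  have := c_max z; rewrite (le_trans le_ac (ltW lt_cz)) lt_zb => /(_ isT).
  by rewrite /Order.ge /= leNgt lt_cz.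
apply: (R_trans c); last exact: (R_primes (c, b)).
apply: (IH _ lt_cb le_ac) => p pp le_a le_c; apply: R_primes => //.
exact: le_trans le_c (ltW lt_cb).
Qed.

Variable sigma : C * C -> D.

(* Unlike [rep sigma a b], which is [\bot] when [b < a], cdist is symmetric. *)
Definition cdist a b : D := \join_(p | prime_int p && within p a b) sigma p.

Lemma cdist_sym a b : cdist a b = cdist b a.
Proof. by apply: eq_bigl => p; rewrite within_sym. Qed.

Lemma le_color_cdist p a b : prime_int p -> within p a b -> sigma p <= cdist a b.
Proof. by move=> pp pab; apply: (@joins_sup _ _ _ p); rewrite pp pab. Qed.

Lemma cdistxx a : cdist a a = \bot.
Proof.
apply/eqP; rewrite -lex0; apply/joinsP => p /andP[pp].
rewrite /within orbb => /andP[h1 h2].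
by have := lt_le_trans (prime_int_lt pp) (le_trans h2 h1); rewrite ltxx.
Qed.

Lemma cdist_triangle a b c : cdist a c <= cdist a b `|` cdist b c.
Proof.
apply/joinsP => p /andP[pp pac].
case/orP: (within_split b pp pac) => /(le_color_cdist pp) le_p.
  exact: le_trans le_p (leUl _ _).
exact: le_trans le_p (leUr _ _).
Qed.

Lemma cdist_prime p : prime_int p -> cdist p.1 p.2 = sigma p.
Proof.
move=> pp; apply/le_anti; rewrite le_color_cdist ?andbT /within ?lexx //.
apply/joinsP => q /andP[pq /orP[]/andP[h1 h2]]; first by rewrite (prime_int_sub pp pq).
have := lt_trans (lt_le_trans (prime_int_lt pp) h1) (lt_le_trans (prime_int_lt pq) h2).
by rewrite ltxx.
Qed.

Lemma rep_cdist a b : a <= b -> rep sigma a b = cdist a b.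
Proof.
move=> le_ab; apply: eq_bigl => p; rewrite /within; case pp: (prime_int p) => //=.
case: ((b <= p.1) && (p.2 <= a)) / andP => [[h1 h2]|]; rewrite ?orbF //.
have := le_lt_trans le_ab (lt_le_trans (le_lt_trans h1 (prime_int_lt pp)) h2).
by rewrite ltxx.
Qed.

Lemma mem_Rep x : x \in Rep sigma <-> exists a b, x = cdist a b.
Proof.
rewrite inE; split=> [/existsP[a /existsP[b /andP[le_ab /eqP->]]]|[a [b ->]]].
  by exists a, b; rewrite rep_cdist.
apply/existsP; case: (leP a b) => [le_ab|/ltW le_ba].
  by exists a; apply/existsP; exists b; rewrite le_ab rep_cdist ?eqxx.
by exists b; apply/existsP; exists a; rewrite le_ba rep_cdist // cdist_sym eqxx.
Qed.

Definition contraction := {f : C -> C | forall a b, cdist (f a) (f b) <= cdist a b}.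

Definition chain_algebra : algebra C :=
  @Algebra C contraction (fun=> 1%N) (fun f u => sval f (tnth u ord0)).

Definition con_of (x : D) : {set C * C} := [set ab | cdist ab.1 ab.2 <= x].

Definition con_color (th : {set C * C}) : D := \join_(ab in th) cdist ab.1 ab.2.

Lemma congruence_con_of x : is_congruence chain_algebra (con_of x).
Proof.
split=> [a|a b|a b c|f u v /(_ ord0)]; rewrite !inE /=.
- by rewrite cdistxx le0x.
- by rewrite cdist_sym.
- by move=> le_ab le_bc; apply: le_trans (cdist_triangle a b c) _; rewrite leUx le_ab.
- exact: le_trans (svalP f _ _).
Qed.

Lemma congruence_contraction th (f : contraction) a b :
  is_congruence chain_algebra th -> (a, b) \in th -> (sval f a, sval f b) \in th.
Proof. by case=> _ _ _ th_op ab_th; apply: (th_op f [tuple a] [tuple b]) => k; rewrite ord1. Qed.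

Lemma con_color_le x : con_color (con_of x) <= x.
Proof. by apply/joinsP => ab; rewrite inE. Qed.

Lemma le_cdist_con_color th a b : (a, b) \in th -> cdist a b <= con_color th.
Proof. exact: (@joins_sup _ _ _ (a, b) _ (fun ab => cdist ab.1 ab.2)). Qed.

Lemma principal_con_color th :
  is_principal chain_algebra th -> exists a b, con_color th = cdist a b.
Proof.
case=> _ [a [b [ab_th th_min]]]; exists a, b; apply/le_anti.
rewrite le_cdist_con_color // andbT; apply: le_trans (con_color_le (cdist a b)).
by apply/le_joins/th_min; rewrite ?inE ?lexx //; apply: congruence_con_of.
Qed.

Definition collapse q u v (z : C) : C := if z <= q.1 then u else v.

Lemma collapse_contraction q u v : prime_int q -> cdist u v <= sigma q ->
  forall a b, cdist (collapse q u v a) (collapse q u v b) <= cdist a b.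
Proof.
move=> pq le_uv.
have across a b : a <= q.1 -> q.1 < b -> cdist u v <= cdist a b.
  move=> le_a lt_b; apply: le_trans le_uv (le_color_cdist pq _).
  by rewrite /within le_a prime_int_ge.
move=> a b; rewrite /collapse.
case: leP => [le_a|lt_a]; case: leP => [le_b|lt_b]; rewrite ?cdistxx ?le0x //.
  exact: across.
by rewrite cdist_sym [cdist a b]cdist_sym across.
Qed.

Hypothesis sigma_join_irr : forall p, prime_int p -> join_irr (sigma p).

Lemma prime_int_mem_con th p : is_congruence chain_algebra th ->
  prime_int p -> sigma p <= con_color th -> (p.1, p.2) \in th.
Proof.
move=> th_con pp le_p.
have [[a b] ab_th le_pab] := join_irr_le_join (sigma_join_irr pp) le_p.
have [q /andP[pq q_ab] le_pq] := join_irr_le_join (sigma_join_irr pp) le_pab.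
have collapse_q : forall a b, cdist (collapse q p.1 p.2 a) (collapse q p.1 p.2 b) <= cdist a b.
  by apply: collapse_contraction; rewrite ?cdist_prime.
have := congruence_contraction (exist _ _ collapse_q) th_con ab_th.
have above_q z : q.2 <= z -> (z <= q.1) = false.
  by move=> le_z; rewrite leNgt (lt_le_trans (prime_int_lt pq) le_z).
case/orP: q_ab => /andP[h1 h2]; rewrite /= /collapse h1 above_q //.
by case: th_con => _ th_sym _ _ /th_sym.
Qed.

Lemma mem_con th a b : is_congruence chain_algebra th ->
  ((a, b) \in th) = (cdist a b <= con_color th).
Proof.
move=> th_con; apply/idP/idP => [|le_ab]; first exact: le_cdist_con_color.
have [th_refl th_sym th_trans _] := th_con.
wlog le_ab' : a b le_ab / a <= b.
  move=> IH; case: (leP a b) => [|/ltW le_ba]; first exact: IH.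
  by apply: th_sym; apply: IH; rewrite // cdist_sym.
apply: (@interval_of_prime_int (fun a b => (a, b) \in th)) => // [c e f|p pp le1 le2].
  exact: th_trans.
apply: prime_int_mem_con => //; apply: le_trans le_ab.
by apply: le_color_cdist; rewrite /within ?le1 ?le2.
Qed.

Lemma con_of_color th : is_congruence chain_algebra th -> con_of (con_color th) = th.
Proof. by move=> th_con; apply/setP => -[a b]; rewrite inE mem_con. Qed.

Lemma con_color_subset th ps :
  is_congruence chain_algebra th -> is_congruence chain_algebra ps ->
  (th \subset ps) = (con_color th <= con_color ps).
Proof.
move=> th_con ps_con; apply/idP/idP => [|le_th]; first exact: le_joins.
apply/subsetP => -[a b]; rewrite (mem_con _ _ th_con) (mem_con _ _ ps_con).
by move/le_trans; apply.
Qed.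

Lemma principal_con_of a b : is_principal chain_algebra (con_of (cdist a b)).
Proof.
split; first exact: congruence_con_of.
exists a, b; split=> [|ps ps_con ab_ps]; first by rewrite inE lexx.
apply/subsetP => -[c e]; rewrite inE (mem_con _ _ ps_con) => /le_trans; apply.
by rewrite -mem_con.
Qed.

Hypothesis sigma_onto : forall j, join_irr j -> exists p, prime_int p /\ sigma p = j.

Lemma con_colorK x : con_color (con_of x) = x.
Proof.
apply/le_anti; rewrite con_color_le /=.
have sigma_onto' j : join_irr j -> exists2 p, prime_int p & sigma p = j.
  by case/sigma_onto=> p [pp <-]; exists p.
rewrite {1}(join_irr_decomposition sigma_onto' x); apply/joinsP => p /andP[pp le_px].
by rewrite -(cdist_prime pp); apply: le_cdist_con_color; rewrite inE (cdist_prime pp).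
Qed.

End ColoredChain.

Theorem proposition1p8 (d : Order.disp_t) (D : finTBDistrLatticeType d) (Q : {set D})
  (dc : Order.disp_t) (C : finOrderType dc) (sigma : C * C -> D) :
  colored_chain sigma -> Q = Rep sigma ->
  exists (T : finType) (A : algebra T) (phi : {set T * T} -> D),
    [/\ #|T| = #|C|,
        con_lattice_iso A phi
      & (forall x : D, x \in Q <-> exists th, is_principal A th /\ phi th = x)].
Proof.
move=> [sigma_join_irr sigma_onto] ->.
exists C, (chain_algebra sigma), (con_color sigma); split=> //.
  split=> [th ps th_con ps_con eq_color|x|th ps th_con ps_con].
  - by rewrite -(con_of_color sigma_join_irr th_con) eq_color con_of_color.
  - by exists (con_of sigma x); rewrite con_colorK //; split=> //; apply: congruence_con_of.
  - by rewrite (con_color_subset sigma_join_irr).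
move=> x; split=> [/mem_Rep[a [b ->]]|[th [/principal_con_color[a [b ->]] <-]]].
  exists (con_of sigma (cdist sigma a b)); split; first exact: principal_con_of.
  exact: con_colorK.
by apply/mem_Rep; exists a, b.
Qed.
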